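(* For every $\mathcal{ALC}$-formula $\varphi$ and every interpretation $M$: $\mathrm{Mod}(\mathcal{E}(\varphi,M))=\mathrm{Mod}(\varphi)\cup[M]_\varphi$.
   Context: $\mathcal{ALC}$ concepts: $C::=A\mid\neg C\mid(C\sqcap C)\mid\exists r.C$. $\mathcal{ALC}$-formulae: $\phi::=\alpha\mid\neg\phi\mid(\phi\wedge\phi)$, atomic $\alpha::=C(a)\mid r(a,b)\mid(C=\top)$; $\neg\neg\psi$ identified with $\psi$; $\vee$ usual abbreviation. A literal is an atomic formula or its negation. Interpretations: countable nonempty domain, standard semantics. $\mathrm{Mod}(\varphi)$: set of interpretations satisfying $\varphi$. $\mathrm{Sub}(\alpha)=\mathrm{Sub}(\neg\alpha)=\{\alpha,\neg\alpha\}$ for atomic $\alpha$; $\mathrm{Sub}(\psi\wedge\psi')=\mathrm{Sub}(\neg(\psi\wedge\psi'))=\{\psi\wedge\psi',\neg(\psi\wedge\psi')\}\cup\mathrm{Sub}(\psi)\cup\mathrm{Sub}(\psi')$. $\mathrm{con}(\varphi)$: smallest set of concepts containing $C$ whenever $(C=\top)$ or $C(a)$ lies in $\mathrm{Sub}(\varphi)$, closed under subconcepts of $\sqcap$, $\exists r.\cdot$, and under single negation. For an interpretation $I$, $\mathrm{qm}(\varphi,I)=(T,o,f)$ with $T=\{c(x)\mid x\in\Delta^I\}$, $c(x)=\{C\in\mathrm{con}(\varphi)\mid x\in C^I\}$, $o(a)=c(a^I)$ for individuals $a$ in $\varphi$, $f=\{\psi\in\mathrm{Sub}(\varphi)\mid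 I\models\psi\}$. $\mathrm{lit}(f)$: literals in $f$. $\mathcal{E}(\varphi,M)=\varphi$ if $M\models\varphi$, and $\mathcal{E}(\varphi,M)=\varphi\vee\bigwedge\mathrm{lit}(f)$ otherwise, where $\mathrm{qm}(\neg\varphi,M)=(T,o,f)$. $\mathcal{L}_{lit}(\varphi)$: Boolean combinations of atomic formulae occurring in $\varphi$; $M'\equiv_\varphi M$ iff they satisfy the same formulae of $\mathcal{L}_{lit}(\varphi)$; $[M]_\varphi=\{M'\mid M'\equiv_\varphi M\}$. *)

From Stdlib Require Import List Bool Classical ClassicalEpsilon.
Import ListNotations.

Inductive concept : Type :=
| CName : nat -> concept
| CNot : concept -> concept
| CAnd : concept -> concept -> concept
| CEx : nat -> concept -> concept.

Inductive atom : Type :=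
| ACon : concept -> nat -> atom
| ARole : nat -> nat -> nat -> atom
| ATop : concept -> atom.

Inductive formula : Type :=
| FAtom : atom -> formula
| FNot : formula -> formula
| FAnd : formula -> formula -> formula.

Record interp : Type := {
  dom : Type;
  dom_inhabited : inhabited dom;
  dom_countable : exists g : dom -> nat, forall x y, g x = g y -> x = y;
  iconcept : nat -> dom -> Prop;
  irole : nat -> dom -> dom -> Prop;
  iind : nat -> dom
}.

Fixpoint cext (I : interp) (C : concept) : dom I -> Prop :=
  match C with
  | CName A => iconcept I A
  | CNot D => fun x => ~ cext I D x
  | CAnd D E => fun x => cext I D x /\ cext I E x
  | CEx r D => fun x => exists y, irole I r x y /\ cext I D y
  end.

Definition sat_atom (I : interp) (a : atom) : Prop :=
  match a with
  | ACon C i => cext I C (iind I i)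
  | ARole r i j => irole I r (iind I i) (iind I j)
  | ATop C => forall x, cext I C x
  end.

Fixpoint sat (I : interp) (phi : formula) : Prop :=
  match phi with
  | FAtom a => sat_atom I a
  | FNot p => ~ sat I p
  | FAnd p q => sat I p /\ sat I q
  end.

Definition Mod (phi : formula) : interp -> Prop := fun I => sat I phi.

Definition FOr (p q : formula) : formula := FNot (FAnd (FNot p) (FNot q)).

(* Sub, with double negation identified: Sub(~~psi) = Sub(psi). *)
Fixpoint Sub (phi : formula) : list formula :=
  match phi with
  | FAtom a => [FAtom a; FNot (FAtom a)]
  | FAnd p q => FAnd p q :: FNot (FAnd p q) :: Sub p ++ Sub q
  | FNot g =>
      match g with
      | FAtom a => [FAtom a; FNot (FAtom a)]
      | FAnd p q => FAnd p q :: FNot (FAnd p q) :: Sub p ++ Sub q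
      | FNot h => Sub h
      end
  end.

Inductive con (phi : formula) : concept -> Prop :=
| con_top : forall C, In (FAtom (ATop C)) (Sub phi) -> con phi C
| con_at : forall C a, In (FAtom (ACon C a)) (Sub phi) -> con phi C
| con_andl : forall C D, con phi (CAnd C D) -> con phi C
| con_andr : forall C D, con phi (CAnd C D) -> con phi D
| con_ex : forall r C, con phi (CEx r C) -> con phi C
| con_neg : forall C, con phi C -> con phi (CNot C).

Definition ctype (phi : formula) (I : interp) (x : dom I) : concept -> Prop :=
  fun C => con phi C /\ cext I C x.
Definition qm_T (phi : formula) (I : interp) : (concept -> Prop) -> Prop :=
  fun t => exists x : dom I, t = ctype phi I x.
Definition qm_o (phi : formula) (I : interp) (a : nat) : concept -> Prop :=
  ctype phi I (iind I a).
Definition qm_f (phi : formula) (I : interp) : formula -> Prop :=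
  fun psi => In psi (Sub phi) /\ sat I psi.
Definition qm (phi : formula) (I : interp) :=
  (qm_T phi I, qm_o phi I, qm_f phi I).

Definition is_literal (psi : formula) : bool :=
  match psi with
  | FAtom _ => true
  | FNot (FAtom _) => true
  | _ => false
  end.

Definition decP (P : Prop) : bool :=
  if excluded_middle_informative P then true else false.

Definition lit_f (phi : formula) (I : interp) : list formula :=
  let '(_, _, f) := qm phi I in
  filter (fun psi => is_literal psi && decP (f psi)) (Sub phi).

(* a fixed tautology, only used as the (never arising) empty conjunction *)
Definition FTrue : formula :=
  FNot (FAnd (FAtom (ATop (CName 0))) (FNot (FAtom (ATop (CName 0))))).

Fixpoint bigAnd (l : list formula) : formula :=
  match l with
  | [] => FTrue
  | [x] => x
  | x :: xs => FAnd x (bigAnd xs)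
  end.

Definition E (phi : formula) (M : interp) : formula :=
  if excluded_middle_informative (sat M phi) then phi
  else FOr phi (bigAnd (lit_f (FNot phi) M)).

Fixpoint atoms (phi : formula) : list atom :=
  match phi with
  | FAtom a => [a]
  | FNot p => atoms p
  | FAnd p q => atoms p ++ atoms q
  end.

Inductive Llit (phi : formula) : formula -> Prop :=
| Llit_atom : forall a, In a (atoms phi) -> Llit phi (FAtom a)
| Llit_not : forall p, Llit phi p -> Llit phi (FNot p)
| Llit_and : forall p q, Llit phi p -> Llit phi q -> Llit phi (FAnd p q).

Definition equiv_phi (phi : formula) (M' M : interp) : Prop :=
  forall psi, Llit phi psi -> (sat M' psi <-> sat M psi).

Definition eqclass (phi : formula) (M : interp) : interp -> Prop :=
  fun M' => equiv_phi phi M' M.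

(** Since Sub(¬φ) = Sub(φ) contains every atom α of φ together with ¬α, the
    conjunction of the literals of Sub(¬φ) true in M fixes the truth value of
    every atom of φ to its value in M; hence an interpretation satisfies it iff it
    agrees with M on all of L_lit(φ), i.e. iff it lies in [M]_φ.  When M ⊨ φ
    nothing has to be added, because φ ∈ L_lit(φ) forces [M]_φ ⊆ Mod(φ). *)

From Stdlib Require Import List Bool Classical ClassicalEpsilon.

Lemma Sub_FNot (p : formula) : Sub (FNot p) = Sub p.
Proof. induction p as [| p IH |]; [reflexivity | exact (eq_sym IH) | reflexivity]. Qed.

Lemma atom_literals_in_Sub (p : formula) (a : atom) :
  In a (atoms p) -> In (FAtom a) (Sub p) /\ In (FNot (FAtom a)) (Sub p).
Proof.
  induction p as [b | p IH | p IHp q IHq]; intros Ha.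
  - destruct Ha as [<- | []]. simpl. auto.
  - rewrite Sub_FNot. auto.
  - simpl in *. apply in_app_or in Ha.
    destruct Ha as [Ha | Ha]; [destruct (IHp Ha) | destruct (IHq Ha)];
      split; right; right; apply in_or_app; auto.
Qed.

Lemma literal_in_Sub_atoms (p psi : formula) :
  In psi (Sub p) -> is_literal psi = true ->
  exists a, In a (atoms p) /\ (psi = FAtom a \/ psi = FNot (FAtom a)).
Proof.
  induction p as [b | p IH | p IHp q IHq]; intros Hpsi Hlit.
  - exists b. simpl in *. intuition.
  - rewrite Sub_FNot in Hpsi. exact (IH Hpsi Hlit).
  - simpl in Hpsi. destruct Hpsi as [<- | [<- | Hpsi]]; try discriminate.
    apply in_app_or in Hpsi.
    destruct Hpsi as [Hpsi | Hpsi];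
      [destruct (IHp Hpsi Hlit) as [a [Ha Hform]] | destruct (IHq Hpsi Hlit) as [a [Ha Hform]]];
      exists a; simpl; rewrite in_app_iff; auto.
Qed.

Lemma Llit_of_incl_atoms (phi psi : formula) :
  incl (atoms psi) (atoms phi) -> Llit phi psi.
Proof.
  induction psi as [a | p IH | p IHp q IHq]; simpl; intros Hincl.
  - constructor. apply Hincl. now left.
  - constructor. auto.
  - apply incl_app_inv in Hincl as [Hp Hq]. constructor; auto.
Qed.

Lemma Llit_refl (phi : formula) : Llit phi phi.
Proof. apply Llit_of_incl_atoms, incl_refl. Qed.

Lemma equiv_phi_atoms (phi : formula) (I M : interp) :
  equiv_phi phi I M <->
  (forall a, In a (atoms phi) -> (sat_atom I a <-> sat_atom M a)).
Proof.
  split.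
  - intros Heq a Ha. apply (Heq (FAtom a)). now constructor.
  - intros Hatoms psi Hpsi. induction Hpsi; simpl.
    + auto.
    + rewrite IHHpsi. tauto.
    + rewrite IHHpsi1, IHHpsi2. tauto.
Qed.

Lemma eqclass_sat (phi : formula) (M I : interp) :
  eqclass phi M I -> (sat I phi <-> sat M phi).
Proof. intros Heq. apply Heq, Llit_refl. Qed.

Lemma sat_FOr (I : interp) (p q : formula) :
  sat I (FOr p q) <-> sat I p \/ sat I q.
Proof. simpl. split; [intros H; apply NNPP |]; tauto. Qed.

Lemma sat_bigAnd (I : interp) (l : list formula) :
  sat I (bigAnd l) <-> (forall psi, In psi l -> sat I psi).
Proof.
  induction l as [| p l IH].
  - simpl. split; [intros _ ? [] | tauto].
  - destruct l as [| q l].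
    + simpl. split; [intros H ? [<- | []] | intros H; apply H]; auto.
    + change (sat I (FAnd p (bigAnd (q :: l))) <->
              (forall psi, In psi (p :: q :: l) -> sat I psi)).
      simpl sat. rewrite IH. simpl. intuition (subst; auto).
Qed.

Lemma decP_spec (P : Prop) : decP P = true <-> P.
Proof.
  unfold decP. destruct (excluded_middle_informative P); split; auto; discriminate.
Qed.

Lemma In_lit_f_FNot (phi : formula) (M : interp) (psi : formula) :
  In psi (lit_f (FNot phi) M) <->
  In psi (Sub phi) /\ is_literal psi = true /\ sat M psi.
Proof.
  unfold lit_f, qm, qm_f. rewrite Sub_FNot.
  rewrite filter_In, andb_true_iff, decP_spec. tauto.
Qed.

Lemma sat_lit_f_FNot (phi : formula) (M I : interp) :
  sat I (bigAnd (lit_f (FNot phi) M)) <-> eqclass phi M I.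
Proof.
  rewrite sat_bigAnd. unfold eqclass. rewrite equiv_phi_atoms. split.
  - intros Hlits a Ha.
    destruct (atom_literals_in_Sub phi a Ha) as [Hpos Hneg].
    destruct (classic (sat_atom M a)) as [HM | HM].
    + assert (sat I (FAtom a)) by (apply Hlits, In_lit_f_FNot; auto).
      simpl in *. tauto.
    + assert (sat I (FNot (FAtom a))) by (apply Hlits, In_lit_f_FNot; auto).
      simpl in *. tauto.
  - intros Hatoms psi Hpsi.
    apply In_lit_f_FNot in Hpsi as [HSub [Hlit HM]].
    destruct (literal_in_Sub_atoms phi psi HSub Hlit) as [a [Ha [-> | ->]]];
      simpl in *; rewrite (Hatoms a Ha); assumption.
Qed.

Theorem mainTheorem5 (phi : formula) (M : interp) :
  forall I : interp, Mod (E phi M) I <-> (Mod phi I \/ eqclass phi M I).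
Proof.
  intros I. unfold Mod, E.
  destruct (excluded_middle_informative (sat M phi)) as [HM | HM].
  - split; [tauto |].
    intros [HI | Heq]; [exact HI |].
    now apply (eqclass_sat phi M I Heq).
  - now rewrite sat_FOr, sat_lit_f_FNot.
Qed.
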